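(* For all $M>0$, all $q$ with $|q|<1$ and all $\epsilon>0$ there exist constants $C_1,C_2>0$ such that for all $p$ with $|p|<|q|$ we have $C_1\le|(z;p,q)|\le C_2$ for all $z$ with $|z|\le M$ and $|1-z/w|>\epsilon$ for every zero $w$ of $(z;p,q)$.
   Context: $(z;p,q)=\prod_{r,s\ge0}(1-zp^rq^s)$; its zeros are $p^{-r}q^{-s}$, $r,s\ge0$. The paper phrases the condition on $z$ as ''$z$ away from the set of zeros''. *)

From HB Require Import structures.
From mathcomp Require Import all_boot all_order all_algebra.
From mathcomp Require Import all_classical all_reals all_analysis.
From mathcomp Require Import complex.
Set Implicit Arguments. Unset Strict Implicit. Unset Printing Implicit Defensive.
Import Order.TTheory GRing.Theory Num.Theory.
Import numFieldNormedType.Exports.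
Local Open Scope ring_scope.
Local Open Scope complex_scope.

(* Equip C = R[i] with its standard (norm-induced) topology, exactly as
   MathComp-Analysis does for every numFieldType via R^o. *)
#[non_forgetful_inheritance]
HB.instance Definition _ (R : realType) := PseudoPointedMetric.copy R[i] (R[i])^o.

Definition ell_partial (R : realType) (z p q : R[i]) (N : nat) : R[i] :=
  \prod_(r < N) \prod_(s < N) (1 - z * p ^+ r * q ^+ s).

(* The elliptic gamma-type double product (z; p, q) = prod_{r,s >= 0} (1 - z p^r q^s),
   defined as the limit of the square partial products (the product converges
   absolutely for |p|, |q| < 1, so this is its value). *)
Definition ellprod (R : realType) (z p q : R[i]) : R[i] :=
  limn (ell_partial z p q).

(* w is a zero of (.; p, q): some factor 1 - w p^r q^s vanishes, i.e. w = p^-r q^-s. *)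
Definition ellprod_zero (R : realType) (p q w : R[i]) : Prop :=
  exists r s : nat, w * p ^+ r * q ^+ s = 1.

From HB Require Import structures.
From mathcomp Require Import all_boot all_order all_algebra.
From mathcomp Require Import all_classical all_reals all_analysis.
From mathcomp Require Import complex.
From mathcomp Require Import lra ring.
Set Implicit Arguments.
Unset Strict Implicit.
Unset Printing Implicit Defensive.
Import Order.TTheory GRing.Theory Num.Theory.
Import numFieldNormedType.Exports.
Import Normc.
Local Open Scope ring_scope.
Local Open Scope complex_scope.

(* Let t := |q|.  For |z| <= M and |p| <= t every term z p^r q^s has modulus
   at most M t^(r+s).  Passing from the N-th to the (N+1)-st square partial
   product multiplies it by the factors of the shell max(r, s) = N, whose
   product is 1 + O(t^N) uniformly in z and p.  So beyond a threshold K that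
   depends only on M and t, all partial products, and hence their limit, lie
   between 1/2 and 3/2 times the K-th one.  That one has K^2 factors, each of
   modulus at most 1 + M and, away from the zeros, at least min(eps, 1). *)

Section ComplexNorm.
Variable R : realType.
Implicit Types x y : R[i].

Lemma normcE x : `|x| = (normc x)%:C.
Proof. by case: x => a b; rewrite normc_def. Qed.

Lemma normc_ge0 x : 0 <= normc x.
Proof. by case: x => a b; exact: sqrtr_ge0. Qed.

Lemma normcB x y : normc (x - y) <= normc x + normc y.
Proof. by rewrite -(normcN y) le_normcD. Qed.

Lemma normcX x n : normc (x ^+ n) = normc x ^+ n.
Proof. by elim: n => [|n IH]; rewrite ?normc1 // !exprS normcM IH. Qed.

Lemma normc_prod (I : Type) (r : seq I) (F : I -> R[i]) :
  normc (\prod_(i <- r) F i) = \prod_(i <- r) normc (F i).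
Proof. exact: (big_morph _ (@normcM R) (normc1 R)). Qed.

Lemma normc_Re x : `|complex.Re x| <= normc x.
Proof. by rewrite -lecR -normcE normc_ge_Re. Qed.

Lemma normc_Im x : `|complex.Im x| <= normc x.
Proof.
have normci : normc 'i = 1 :> R by rewrite /= expr0n expr1n add0r sqrtr1.
by have := normc_Re (x * 'i); rewrite ReiNIm normrN normcM normci mulr1.
Qed.

Lemma normc_le_ReIm x : normc x <= `|complex.Re x| + `|complex.Im x|.
Proof.
case: x => a b /=; rewrite -[leRHS]ger0_norm ?addr_ge0 // -sqrtr_sqr ler_sqrt ?sqr_ge0 //.
by rewrite sqrrD !real_normK ?num_real // -addrA lerD2l lerDr.
Qed.

Lemma normc_near1 y (d : R) : normc (y - 1) <= d -> 1 - d <= normc y <= 1 + d.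
Proof.
move=> yd; have := le_normcD (y - 1) 1; have := normcB y (y - 1).
by rewrite subrK (subKr y) normc1; lra.
Qed.

Lemma normc_prod1B_sub1 (I : Type) (r : seq I) (F : I -> R[i]) :
  \sum_(i <- r) normc (F i) <= 1/2 ->
  normc (\prod_(i <- r) (1 - F i) - 1) <= 2 * \sum_(i <- r) normc (F i).
Proof.
elim: r => [|i r IH]; first by rewrite !big_nil subrr normc0 mulr0.
rewrite !big_cons => small.
have a_ge0 := normc_ge0 (F i).
have S_ge0 : 0 <= \sum_(j <- r) normc (F j) by rewrite sumr_ge0 // => j _; exact: normc_ge0.
have /IH IHr : \sum_(j <- r) normc (F j) <= 1/2 by lra.
set P := \prod_(j <- r) _ in IHr *; set S := \sum_(j <- r) _ in S_ge0 IHr small *.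
have -> : (1 - F i) * P - 1 = (1 - F i) * (P - 1) - F i by ring.
apply: le_trans (normcB _ _) _; rewrite normcM.
have factor_le : normc (1 - F i) <= 1 + normc (F i) by rewrite -(normc1 R) normcB.
have := normc_ge0 (P - 1); have := normc_ge0 (1 - F i); nra.
Qed.

End ComplexNorm.

Section Geometric.
Variable R : realType.

Lemma sum_expr_le (t : R) n : 0 <= t -> t < 1 -> \sum_(i < n) t ^+ i <= (1 - t)^-1.
Proof.
move=> t_ge0 t_lt1; have t1_gt0 : 0 < 1 - t by lra.
have geom : (1 - t) * \sum_(i < n) t ^+ i = 1 - t ^+ n.
  by apply: oppr_inj; rewrite -mulNr !opprB subrX1.
rewrite -(ler_pM2l t1_gt0) geom divff ?gt_eqF //.
by rewrite gerBl exprn_ge0.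
Qed.

Lemma exists_expr_le (t d : R) : 0 <= t -> t < 1 -> 0 < d -> exists K : nat, t ^+ K <= d.
Proof.
move=> t_ge0 t_lt1 d_gt0.
have : `|t| < 1 by rewrite ger0_norm.
move=> /cvg_expr /cvgr_dist_lt /(_ _ d_gt0) [K _ HK].
exists K; have := HK K (leqnn K).
by rewrite sub0r normrN ger0_norm ?exprn_ge0 // => /ltW.
Qed.

Lemma cvgn_geometric_cauchy (v : nat -> R) (c t : R) (K : nat) :
  0 <= t -> t < 1 -> 0 <= c ->
  (forall n m, (K <= n)%N -> `|v (n + m)%N - v n| <= c * t ^+ n) -> cvgn v.
Proof.
move=> t_ge0 t_lt1 c_ge0 cauchy_v.
apply: cauchy_cvg; apply: cauchy_exP => e e_gt0.
have c1_gt0 : 0 < c + 1 by lra.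
have [N tN_le] := exists_expr_le t_ge0 t_lt1 (divr_gt0 e_gt0 c1_gt0).
exists (v (K + N)%N); exists (K + N)%N => // n /= le_n.
rewrite -ball_normE /ball_ /= distrC -(subnKC le_n).
apply: le_lt_trans (cauchy_v _ _ (leq_addr _ _)) _.
have tKN : t ^+ (K + N) <= e / (c + 1).
  by apply: le_trans tN_le; apply: ler_wiXn2l => //; [exact: ltW | exact: leq_addl].
apply: le_lt_trans (ler_wpM2l c_ge0 tKN) _.
by rewrite mulrA ltr_pdivrMr // mulrC ltr_pM2l //; lra.
Qed.

End Geometric.

Section ComplexLimits.
Variable R : realType.

Lemma normc_telescope_le (u : nat -> R[i]) (c t : R) (K : nat) :
  0 <= t -> t < 1 -> 0 <= c ->
  (forall n, (K <= n)%N -> normc (u n.+1 - u n) <= c * t ^+ n) ->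
  forall n m, (K <= n)%N -> normc (u (n + m)%N - u n) <= c / (1 - t) * t ^+ n.
Proof.
move=> t_ge0 t_lt1 c_ge0 step_le n m le_Kn.
have : normc (u (n + m)%N - u n) <= c * t ^+ n * \sum_(i < m) t ^+ i.
  elim: m => [|m IH]; first by rewrite addn0 subrr normc0 big_ord0 mulr0.
  rewrite big_ord_recr /= mulrDr addnS.
  have -> : u (n + m).+1 - u n = (u (n + m).+1 - u (n + m)%N) + (u (n + m)%N - u n) by ring.
  apply: le_trans (le_normcD _ _) _; rewrite addrC lerD // -mulrA -exprD.
  by apply: step_le; apply: leq_trans le_Kn (leq_addr _ _).
move=> /le_trans; apply; rewrite [leRHS]mulrAC.
by apply: ler_wpM2l; [rewrite mulr_ge0 ?exprn_ge0 | exact: sum_expr_le].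
Qed.

Lemma cvg_geometric_steps (u : nat -> R[i]) (c t : R) (K : nat) :
  0 <= t -> t < 1 -> 0 <= c ->
  (forall n, (K <= n)%N -> normc (u n.+1 - u n) <= c * t ^+ n) ->
  exists l : R[i], (u @ \oo --> l)%classic.
Proof.
move=> t_ge0 t_lt1 c_ge0 /(normc_telescope_le t_ge0 t_lt1 c_ge0) cauchy_u.
have c'_ge0 : 0 <= c / (1 - t) by rewrite divr_ge0 // subr_ge0 ltW.
have cvg_Re : cvgn (fun n => complex.Re (u n)).
  apply: (cvgn_geometric_cauchy t_ge0 t_lt1 c'_ge0) => n m le_Kn.
  by rewrite -raddfB; apply: le_trans (normc_Re _) (cauchy_u n m le_Kn).
have cvg_Im : cvgn (fun n => complex.Im (u n)).
  apply: (cvgn_geometric_cauchy t_ge0 t_lt1 c'_ge0) => n m le_Kn.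
  by rewrite -raddfB; apply: le_trans (normc_Im _) (cauchy_u n m le_Kn).
exists (limn (fun n => complex.Re (u n)) +i* limn (fun n => complex.Im (u n))).
apply/(@cvgrPdist_lt R[i] R[i]^o) => e e_gt0.
have [Im_e Re_e_gt0] : complex.Im e = 0 /\ 0 < complex.Re e.
  by move: e_gt0; rewrite ltcE /= => /andP[/eqP <- ->].
have -> : e = (complex.Re e)%:C by case: e Im_e {e_gt0 Re_e_gt0} => ? ? /= ->.
have e2_gt0 : 0 < complex.Re e / 2 by lra.
move: cvg_Re cvg_Im => /cvgr_dist_lt /(_ _ e2_gt0) near_Re /cvgr_dist_lt /(_ _ e2_gt0) near_Im.
near=> n; rewrite normcE ltcR; apply: le_lt_trans (normc_le_ReIm _) _.
have : `|limn (fun n => complex.Re (u n)) - complex.Re (u n)| < complex.Re e / 2 by near: n.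
have : `|limn (fun n => complex.Im (u n)) - complex.Im (u n)| < complex.Re e / 2 by near: n.
by case: (u n) => a b /=; lra.
Unshelve. all: by end_near.
Qed.

Lemma normc_lim_bounds (u : nat -> R[i]) (l : R[i]) (C1 C2 : R) :
  (u @ \oo --> l)%classic -> (\forall n \near \oo, C1 <= normc (u n) <= C2)%classic ->
  C1 <= normc l <= C2.
Proof.
move=> u_l bounds_u.
have near_l e : 0 < e -> exists n, normc (l - u n) < e /\ C1 <= normc (u n) <= C2.
  move=> e_gt0; have e_gt0' : (0 : R[i]) < e%:C by rewrite ltcR.
  have near_e : (\forall n \near \oo, normc (l - u n) < e)%classic.
    move: u_l => /(@cvgr_dist_lt _ R[i]^o) /(_ _ e_gt0').
    by apply: filterS => n; rewrite normcE ltcR.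
  have : (\forall n \near \oo, normc (l - u n) < e /\ C1 <= normc (u n) <= C2)%classic.
    by near=> n; split; near: n.
  by move=> /filter_ex [n [? ?]]; exists n.
apply/andP; split; apply/ler_addgt0Pr => e e_gt0;
  have [n [lu_e /andP[C1u uC2]]] := near_l e e_gt0.
  have := le_normcD l (u n - l).
  by rewrite addrC subrK -(normcN (u n - l)) opprB; lra.
by have := le_normcD (u n) (l - u n); rewrite addrC subrK; lra.
Unshelve. all: by end_near.
Qed.

End ComplexLimits.

Section ConvergentProduct.
Variable R : realType.
Variables (u Q : nat -> R[i]) (c t : R) (K : nat).
Hypotheses (u_step : forall n, u n.+1 = u n * Q n)
  (t_ge0 : 0 <= t) (t_lt1 : t < 1) (c_ge0 : 0 <= c)
  (Q_near1 : forall n, (K <= n)%N -> normc (Q n - 1) <= c * t ^+ n)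
  (tail_small : c * t ^+ K <= (1 - t) / 4).

Lemma u_shift m : u (K + m) = u K * \prod_(i < m) Q (K + i).
Proof.
elim: m => [|m IH]; first by rewrite addn0 big_ord0 mulr1.
by rewrite addnS u_step IH big_ord_recr /= mulrA.
Qed.

Lemma tail_prod_near1 m : normc (\prod_(i < m) Q (K + i) - 1) <= 1/2.
Proof.
have term_le i : normc (1 - Q (K + i)) <= c * t ^+ K * t ^+ i.
  by rewrite -normcN opprB -mulrA -exprD; apply: Q_near1; exact: leq_addr.
have tail_sum : \sum_(i < m) normc (1 - Q (K + i)) <= 1/4.
  apply: le_trans (_ : _ <= \sum_(i < m) c * t ^+ K * t ^+ i) _.
    by apply: ler_sum => i _; exact: term_le.
  rewrite -mulr_sumr.
  have t1_gt0 : 0 < 1 - t by have := t_lt1; lra.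
  have := ler_wpM2l (ltW t1_gt0) (sum_expr_le m t_ge0 t_lt1).
  rewrite divff ?gt_eqF // => geom_le.
  have : 0 <= \sum_(i < m) t ^+ i by rewrite sumr_ge0 // => i _; exact: exprn_ge0.
  have : 0 <= c * t ^+ K by rewrite mulr_ge0 ?exprn_ge0.
  have := tail_small; nra.
have /normc_prod1B_sub1 : \sum_(i < m) normc (1 - Q (K + i)) <= 1/2 by lra.
under eq_bigr do rewrite subKr.
lra.
Qed.

Lemma normc_u_bounds n : (K <= n)%N -> normc (u K) / 2 <= normc (u n) <= 3/2 * normc (u K).
Proof.
move=> le_Kn; rewrite -(subnKC le_Kn) u_shift normcM.
have /andP[tail_ge tail_le] := normc_near1 (tail_prod_near1 (n - K)).
have uK_ge0 := normc_ge0 (u K); apply/andP; split; nra.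
Qed.

Lemma normc_u_step n :
  (K <= n)%N -> normc (u n.+1 - u n) <= 3/2 * normc (u K) * c * t ^+ n.
Proof.
move=> le_Kn; rewrite u_step -{2}[u n]mulr1 -mulrBr normcM -mulrA.
have /andP[_ u_le] := normc_u_bounds le_Kn.
by apply: ler_pM; rewrite ?normc_ge0 ?Q_near1.
Qed.

Lemma normc_lim_u : normc (u K) / 2 <= normc (limn u) <= 3/2 * normc (u K).
Proof.
have c'_ge0 : 0 <= 3/2 * normc (u K) * c by rewrite !mulr_ge0 ?normc_ge0.
have [l u_l] := cvg_geometric_steps t_ge0 t_lt1 c'_ge0 normc_u_step.
rewrite (cvg_lim (@norm_hausdorff _ R[i]^o) u_l).
by apply: normc_lim_bounds u_l _; exists K => // n; exact: normc_u_bounds.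
Qed.

End ConvergentProduct.

Definition ell_shell (n : nat) : seq (nat * nat) :=
  [seq (r, n) | r <- index_iota 0 n] ++ [seq (n, s) | s <- index_iota 0 n.+1].

Section EllipticProduct.
Variable R : realType.
Variables (z p q : R[i]).
Local Notation a r s := (z * p ^+ r * q ^+ s).
Local Notation shell_prod n := (\prod_(rs <- ell_shell n) (1 - a rs.1 rs.2)).

Lemma ell_partialS N : ell_partial z p q N.+1 = ell_partial z p q N * shell_prod N.
Proof.
rewrite /ell_partial big_ord_recr /=.
under eq_bigr do rewrite big_ord_recr /=.
by rewrite big_split /= -mulrA big_cat !big_map !big_mkord.
Qed.

Variables (M t : R).
Hypotheses (z_le : normc z <= M) (p_le : normc p <= t) (q_le : normc q <= t)
  (t_ge0 : 0 <= t) (t_lt1 : t < 1) (M_ge0 : 0 <= M).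

Lemma normc_ell_term r s : normc (a r s) <= M * t ^+ (r + s).
Proof.
have powX_le x k : normc x <= t -> normc x ^+ k <= t ^+ k.
  by move=> x_le; rewrite lerXn2r ?nnegrE ?normc_ge0.
rewrite !normcM !normcX exprD mulrA.
apply: ler_pM; rewrite ?mulr_ge0 ?exprn_ge0 ?normc_ge0 ?powX_le //.
by apply: ler_pM; rewrite ?exprn_ge0 ?normc_ge0 ?powX_le.
Qed.

Lemma ell_shell_sum n :
  \sum_(rs <- ell_shell n) normc (a rs.1 rs.2) <= 2 * (M / (1 - t)) * t ^+ n.
Proof.
have half_le k (F : nat -> R) : (forall r, F r <= M * t ^+ n * t ^+ r) ->
    \sum_(0 <= r < k) F r <= M / (1 - t) * t ^+ n.
  move=> F_le; apply: le_trans (_ : _ <= \sum_(0 <= r < k) M * t ^+ n * t ^+ r) _.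
    by apply: ler_sum => r _; exact: F_le.
  rewrite -mulr_sumr big_mkord [leRHS]mulrAC.
  by apply: ler_wpM2l; rewrite ?mulr_ge0 ?exprn_ge0 ?sum_expr_le.
rewrite big_cat !big_map /= -mulrA mulr_natl mulr2n.
apply: lerD; apply: half_le => r; rewrite -[leRHS]mulrA -exprD.
  by rewrite addnC normc_ell_term.
exact: normc_ell_term.
Qed.

Lemma ell_shell_near1 n : M / (1 - t) * t ^+ n <= 1/4 ->
  normc (shell_prod n - 1) <= 4 * (M / (1 - t)) * t ^+ n.
Proof.
move=> small; have shell_sum := ell_shell_sum n.
have /normc_prod1B_sub1 : \sum_(rs <- ell_shell n) normc (a rs.1 rs.2) <= 1/2 by lra.
by move=> /le_trans; apply; lra.
Qed.

Lemma normc_ell_partial_bounds K (e : R) : 0 <= e -> (forall r s, e <= normc (1 - a r s)) ->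
  e ^+ (K * K) <= normc (ell_partial z p q K) <= (1 + M) ^+ (K * K).
Proof.
move=> e_ge0 e_le; have t_le1 : t <= 1 by have := t_lt1; lra.
have const_prod (x : R) : \prod_(i < K) x = x ^+ K by rewrite prodr_const card_ord.
rewrite /ell_partial normc_prod !exprM -!const_prod.
under eq_bigr do rewrite normc_prod.
apply/andP; split; apply: ler_prod => r _; apply/andP; split.
- by rewrite prodr_ge0.
- by apply: ler_prod => s _; rewrite e_ge0 e_le.
- by rewrite prodr_ge0 // => s _; exact: normc_ge0.
apply: ler_prod => s _; rewrite normc_ge0 /=.
apply: le_trans (normcB _ _) _; rewrite normc1 lerD2l.
apply: le_trans (normc_ell_term r s) _.
by rewrite ler_piMr ?exprn_ile1.
Qed.

Lemma normc_ellprod_bounds K (e : R) : 0 <= e -> (forall r s, e <= normc (1 - a r s)) ->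
  4 * (M / (1 - t)) * t ^+ K <= (1 - t) / 4 ->
  e ^+ (K * K) / 2 <= normc (ellprod z p q) <= 3/2 * (1 + M) ^+ (K * K).
Proof.
move=> e_ge0 e_le tail_small; have t1_gt0 : 0 < 1 - t by have := t_lt1; lra.
have g_ge0 : 0 <= M / (1 - t) by rewrite divr_ge0 // ltW.
have shell_near1 n : (K <= n)%N -> normc (shell_prod n - 1) <= 4 * (M / (1 - t)) * t ^+ n.
  move=> le_Kn; apply: ell_shell_near1.
  have := ler_wiXn2l t_ge0 (ltW t_lt1) le_Kn; have := exprn_ge0 n t_ge0.
  by have := t_ge0; nra.
have /andP[uK_ge uK_le] := normc_ell_partial_bounds K e_ge0 e_le.
have /andP[lim_ge lim_le] :=
  normc_lim_u ell_partialS t_ge0 t_lt1 (mulr_ge0 (ler0n _ 4) g_ge0) shell_near1 tail_small.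
by rewrite /ellprod; apply/andP; split; lra.
Qed.

End EllipticProduct.

Lemma exists_tail_small (R : realType) (M t : R) : 0 < M -> 0 <= t -> t < 1 ->
  exists K : nat, 4 * (M / (1 - t)) * t ^+ K <= (1 - t) / 4.
Proof.
move=> M_gt0 t_ge0 t_lt1.
have d_gt0 : 0 < (1 - t) ^+ 2 / (16 * M) by rewrite divr_gt0 ?exprn_gt0 //; lra.
have [K tK_le] := exists_expr_le t_ge0 t_lt1 d_gt0; exists K.
have -> : (1 - t) / 4 = 4 * (M / (1 - t)) * ((1 - t) ^+ 2 / (16 * M)).
  by field; apply/andP; split; apply/negP => /eqP; lra.
by apply: ler_wpM2l => //; rewrite mulr_ge0 ?divr_ge0 //; lra.
Qed.

(* The factors with [p ^+ r * q ^+ s = 0] equal 1 and are not controlled by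
   the hypothesis on the zeros, hence the cap at 1. *)
Lemma normc_factor_ge (R : realType) (z p q : R[i]) (eps : R) :
  (forall w : R[i], ellprod_zero p q w -> eps%:C < `|1 - z / w|) ->
  forall r s, Num.min eps 1 <= normc (1 - z * p ^+ r * q ^+ s).
Proof.
move=> zeros_far r s; rewrite -mulrA.
have [->|pq_neq0] := eqVneq (p ^+ r * q ^+ s) 0.
  by rewrite mulr0 subr0 normc1 ge_min lexx orbT.
have /zeros_far : ellprod_zero p q (p ^+ r * q ^+ s)^-1.
  by exists r, s; rewrite -mulrA mulVf.
by rewrite invrK normcE ltcR => /ltW; apply: le_trans; rewrite ge_min lexx.
Qed.

Theorem lemmaA2 (R : realType) (M : R) (q : R[i]) (eps : R) :
  0 < M -> `|q| < 1 -> 0 < eps ->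
  exists C1 C2 : R, 0 < C1 /\ 0 < C2 /\
    forall p : R[i], `|p| < `|q| ->
      forall z : R[i], `|z| <= M%:C ->
        (forall w : R[i], ellprod_zero p q w -> eps%:C < `|1 - z / w|) ->
        C1%:C <= `|ellprod z p q| <= C2%:C.
Proof.
move=> M_gt0 q_lt1 eps_gt0.
have t_ge0 := normc_ge0 q; set t := normc q in t_ge0.
have t_lt1 : t < 1 by move: q_lt1; rewrite normcE ltcE /= => /andP[_].
have [K tail_small] := exists_tail_small M_gt0 t_ge0 t_lt1.
set e := Num.min eps 1; have e_gt0 : 0 < e by rewrite lt_min eps_gt0 ltr01.
exists (e ^+ (K * K) / 2), (3/2 * (1 + M) ^+ (K * K)).
split; first by rewrite divr_gt0 ?exprn_gt0.
split; first by rewrite mulr_gt0 ?exprn_gt0 //; lra.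
move=> p p_lt z z_le /normc_factor_ge factor_ge.
rewrite normcE !lecR; apply: normc_ellprod_bounds (ltW e_gt0) factor_ge tail_small => //.
- by move: z_le; rewrite normcE lecR.
- by move: p_lt; rewrite !normcE ltcR => /ltW.
- exact: ltW.
Qed.
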